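(* Let $A=op\langle\{F_1=w_1,\dots,F_n=w_n\}\rangle\prec N$ be an aggregate in which $F_1,\dots,F_n$ are atoms, and suppose $A$ is monotone or antimonotone. Then $A_{tr}$ is strongly equivalent to $$\bigwedge_{I\subseteq\{1,\dots,n\}\,:\,op(\{w_i:i\in I\})\not\prec N}\Big(\big(\bigwedge_{i\in I}F_i\big)\to\big(\bigvee_{i\in\{1,\dots,n\}\setminus I}F_i\big)\Big).$$
   Context: Formulas with aggregates: atoms, $\bot$, combinations by $\wedge,\vee,\to$ ($\neg F:=F\to\bot$, $\top:=\bot\to\bot$; empty conjunction $\top$, empty disjunction $\bot$), and aggregates $op\langle\{F_1=w_1,\dots,F_n=w_n\}\rangle\prec N$ with $op$ a function from finite multisets of reals to $\mathbb R\cup\{\pm\infty\}$, $w_i,N$ reals, $\prec$ a binary relation on reals ($\not\prec$ its negation). Reduct: $\bot^X=\bot$; $a^X=a$ if $a\in X$, else $\bot$; $(F\otimes G)^X=F^X\otimes G^X$ if $X\models F\otimes G$, else $\bot$. $X$ is a stable model of a theory $\Gamma$ if $X\models\Gamma^X$ and no proper subset of $X$ satisfies $\Gamma^X$; two formulas are strongly equivalent if adding either to any theory gives the same stable models. The aggregate is monotone if for all sub-multisets $W_1\subseteq W_2\subseteq\{w_1,\dots,w_n\}$, $op(W_1)\prec N$ implies $op(W_2)\prec N$; antimonotone if for all $W_2\subseteq W_1\subseteq\{w_1,\dots,w_n\}$, $op(W_1)\prec N$ implies $op(W_2)\prec N$. Writing $W_I$ for the multiset $\{w_i:i\in I\}$,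 the Pelov–Denecker–Bruynooghe translation is $$A_{tr}=\bigvee_{\substack{I_1\subseteq I_2\subseteq\{1,\dots,n\}:\ op(W_I)\prec N\\ \text{for all } I \text{ with } I_1\subseteq I\subseteq I_2}}\Big(\bigwedge_{i\in I_1}F_i\wedge\bigwedge_{i\in\{1,\dots,n\}\setminus I_2}\neg F_i\Big).$$ *)

From Stdlib Require Import Reals List Permutation Classical ClassicalEpsilon Bool.
Import ListNotations.
Open Scope R_scope.
Set Implicit Arguments.

Inductive Rbar : Type := Fin (r : R) | PInf | MInf.

(* Formulas with aggregates over a set of atoms [atom].
   [Agg op prec es N] is  op<{F1=w1,...,Fn=wn}> prec N  with es = [(F1,w1);...;(Fn,wn)].
   [op] acts on finite multisets of reals, represented as lists (its permutation
   invariance is required where relevant); [prec] compares op's value with N. *)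
Inductive form (atom : Type) : Type :=
| Bot : form atom
| Atom : atom -> form atom
| And : form atom -> form atom -> form atom
| Or : form atom -> form atom -> form atom
| Imp : form atom -> form atom -> form atom
| Agg : (list R -> Rbar) -> (Rbar -> R -> Prop) -> list (form atom * R) -> R -> form atom.
Arguments Bot {atom}.

Definition Neg {atom} (F : form atom) : form atom := Imp F Bot.
Definition Top {atom : Type} : form atom := Imp Bot Bot.

Fixpoint bigAnd {atom} (l : list (form atom)) : form atom :=
  match l with
  | [] => Top
  | [F] => F
  | F :: l' => And F (bigAnd l')
  end.
Fixpoint bigOr {atom} (l : list (form atom)) : form atom :=
  match l with
  | [] => Bot
  | [F] => F
  | F :: l' => Or F (bigOr l')
  end.

(* Satisfaction; an interpretation is a set of atoms X.
   X |= op<{F_i=w_i}> prec N  iff  prec (op {w_i : X |= F_i}) N. *)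
Fixpoint sat {atom} (X : atom -> Prop) (F : form atom) : Prop :=
  match F with
  | Bot => False
  | Atom a => X a
  | And F G => sat X F /\ sat X G
  | Or F G => sat X F \/ sat X G
  | Imp F G => sat X F -> sat X G
  | Agg op prec es N =>
      exists ws : list R,
        (fix selsat (es : list (form atom * R)) (ws : list R) {struct es} : Prop :=
           match es with
           | [] => ws = []
           | (G, w) :: es' =>
               (sat X G /\ exists ws', ws = w :: ws' /\ selsat es' ws')
               \/ (~ sat X G /\ selsat es' ws)
           end) es ws
        /\ prec (op ws) N
  end.

Definition emi := excluded_middle_informative.

Fixpoint reduct {atom} (X : atom -> Prop) (F : form atom) : form atom :=
  match F with
  | Bot => Bot
  | Atom a => if emi (X a) then Atom a else Bot
  | And F G => if emi (sat X F /\ sat X G) then And (reduct X F) (reduct X G) else Bot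
  | Or F G => if emi (sat X F \/ sat X G) then Or (reduct X F) (reduct X G) else Bot
  | Imp F G => if emi (sat X F -> sat X G) then Imp (reduct X F) (reduct X G) else Bot
  | Agg op prec es N =>
      if emi (sat X (Agg op prec es N))
      then Agg op prec
             ((fix redl (es : list (form atom * R)) : list (form atom * R) :=
                 match es with
                 | [] => []
                 | (G, w) :: es' => (reduct X G, w) :: redl es'
                 end) es) N
      else Bot
  end.

Definition theory (atom : Type) := form atom -> Prop.

Definition sat_theory {atom} (X : atom -> Prop) (T : theory atom) : Prop :=
  forall F, T F -> sat X F.

Definition reduct_theory {atom} (X : atom -> Prop) (T : theory atom) : theory atom :=
  fun F => exists G, T G /\ F = reduct X G.

Definition proper_subset {atom} (Y X : atom -> Prop) : Prop :=
  (forall a, Y a -> X a) /\ exists a, X a /\ ~ Y a.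

Definition stable_model {atom} (T : theory atom) (X : atom -> Prop) : Prop :=
  sat_theory X (reduct_theory X T) /\
  forall Y, proper_subset Y X -> ~ sat_theory Y (reduct_theory X T).

Definition add_formula {atom} (T : theory atom) (F : form atom) : theory atom :=
  fun G => T G \/ G = F.

Definition strongly_equivalent {atom} (F G : form atom) : Prop :=
  forall (T : theory atom) (X : atom -> Prop),
    stable_model (add_formula T F) X <-> stable_model (add_formula T G) X.

(* Index subsets I of {1..n}: boolean lists of length n; W_I = sel I ws. *)
Fixpoint sel {T} (I : list bool) (l : list T) : list T :=
  match I, l with
  | b :: I', x :: l' => if b then x :: sel I' l' else sel I' l'
  | _, _ => []
  end.

Fixpoint subsets (n : nat) : list (list bool) :=
  match n with
  | O => [[]]
  | S n' => map (cons true) (subsets n') ++ map (cons false) (subsets n')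
  end.

Definition subb (I J : list bool) : bool :=
  forallb (fun p => implb (fst p) (snd p)) (combine I J).

Definition decb (P : Prop) : bool := if emi P then true else false.

Definition submset (W1 W2 : list R) : Prop := exists r, Permutation W2 (W1 ++ r).

Definition monotone_agg (op : list R -> Rbar) (prec : Rbar -> R -> Prop) (ws : list R) (N : R) :=
  forall W1 W2, submset W1 W2 -> submset W2 ws -> prec (op W1) N -> prec (op W2) N.
Definition antimonotone_agg (op : list R -> Rbar) (prec : Rbar -> R -> Prop) (ws : list R) (N : R) :=
  forall W1 W2, submset W2 W1 -> submset W1 ws -> prec (op W1) N -> prec (op W2) N.

Definition PDB_tr {atom} (op : list R -> Rbar) (prec : Rbar -> R -> Prop)
    (es : list (form atom * R)) (N : R) : form atom :=
  let n := length es in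
  let Fs := map fst es in
  let ws := map snd es in
  bigOr (map (fun p : list bool * list bool =>
                bigAnd (sel (fst p) Fs ++ map Neg (sel (map negb (snd p)) Fs)))
           (filter (fun p : list bool * list bool =>
                      andb (subb (fst p) (snd p))
                      (decb (forall I, length I = n -> subb (fst p) I = true ->
                                      subb I (snd p) = true -> prec (op (sel I ws)) N)))
              (list_prod (subsets n) (subsets n)))).

Definition prop18_rhs {atom} (op : list R -> Rbar) (prec : Rbar -> R -> Prop)
    (es : list (form atom * R)) (N : R) : form atom :=
  let n := length es in
  let Fs := map fst es in
  let ws := map snd es in
  bigAnd (map (fun I => Imp (bigAnd (sel I Fs)) (bigOr (sel (map negb I) Fs)))
            (filter (fun I => decb (~ prec (op (sel I ws)) N)) (subsets n))).

From Stdlib Require Import Reals List Permutation Classical Bool.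
Import ListNotations.
Open Scope R_scope.

(* Proof of Proposition 18.
   Strong equivalence of F and G follows once F^X and G^X are satisfied by the
   same subsets Y of X (the usual here-and-there criterion).  For a subset Y of X
   write chi(Y), chi(X) for the characteristic vectors of Y and X on the atoms
   F_1..F_n, and S(I) for "op(W_I) prec N".  We show that both reducts are
   satisfied by Y exactly when S(chi Y) and S(chi X) hold:
   - for the right-hand conjunction this is immediate, since the conjunct for I
     can only fail at I = chi Y (in the reduct) or I = chi X (classically);
   - for the translation A_tr, a disjunct (I1, I2) holds in Y^X iff
     I1 <= chi Y <= chi X <= I2, so every satisfied disjunct yields S(chi Y) and
     S(chi X); conversely the pair (chi Y, chi X) is a valid disjunct because a
     monotone or antimonotone aggregate is "convex": S holds on every I between
     two sets on which it holds. *)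

Section ReductSemantics.
Context {atom : Type}.
Implicit Types (X Y : atom -> Prop) (F G : form atom).

Lemma strongly_equivalent_of_reducts F G :
  (forall X Y, (forall a, Y a -> X a) ->
     (sat Y (reduct X F) <-> sat Y (reduct X G))) -> strongly_equivalent F G.
Proof.
  intros H T X.
  assert (Hmodels : forall Y, (forall a, Y a -> X a) ->
    (sat_theory Y (reduct_theory X (add_formula T F)) <->
     sat_theory Y (reduct_theory X (add_formula T G)))).
  { intros Y HY. unfold sat_theory, reduct_theory, add_formula.
    split; intros Hs F0 [G0 [[HT|HE] ->]].
    - apply Hs. exists G0; auto.
    - subst. apply (H X Y HY). apply Hs. exists F; auto.
    - apply Hs. exists G0; auto.
    - subst. apply (H X Y HY). apply Hs. exists G; auto. }
  unfold stable_model. split; intros [H1 H2]; split.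
  - apply Hmodels; auto.
  - intros Y HY. rewrite <- Hmodels by apply HY. apply H2; auto.
  - apply Hmodels; auto.
  - intros Y HY. rewrite Hmodels by apply HY. apply H2; auto.
Qed.

Lemma reduct_sat X Y F : (forall a, Y a -> X a) -> sat Y (reduct X F) -> sat X F.
Proof.
  intros HY. destruct F; simpl;
  match goal with |- context [emi ?P] => destruct (emi P) as [s|s] | _ => idtac end;
  simpl; intros; try contradiction; auto; tauto.
Qed.

Lemma reduct_And X Y F G : (forall a, Y a -> X a) ->
  (sat Y (reduct X (And F G)) <-> sat Y (reduct X F) /\ sat Y (reduct X G)).
Proof.
  intros HY. simpl. destruct emi as [s|s]; simpl; [tauto|].
  split; [tauto|]. intros [a b]. apply s; split; eapply reduct_sat; eauto.
Qed.

Lemma reduct_Or X Y F G : (forall a, Y a -> X a) ->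
  (sat Y (reduct X (Or F G)) <-> sat Y (reduct X F) \/ sat Y (reduct X G)).
Proof.
  intros HY. simpl. destruct emi as [s|s]; simpl; [tauto|].
  split; [tauto|]. intros [a|b]; apply s; [left|right]; eapply reduct_sat; eauto.
Qed.

Lemma reduct_Imp X Y F G :
  sat Y (reduct X (Imp F G)) <->
  (sat X F -> sat X G) /\ (sat Y (reduct X F) -> sat Y (reduct X G)).
Proof. simpl. destruct emi as [s|s]; simpl; tauto. Qed.

Lemma reduct_Atom X Y (a : atom) : (forall a, Y a -> X a) ->
  (sat Y (reduct X (Atom a)) <-> Y a).
Proof.
  intros HY. simpl. destruct emi as [s|s]; simpl; [tauto|].
  split; [tauto|]. intro h; apply s; auto.
Qed.

Lemma reduct_Neg_Atom X Y (a : atom) : (forall a, Y a -> X a) ->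
  (sat Y (reduct X (Neg (Atom a))) <-> ~ X a).
Proof.
  intros HY. unfold Neg. rewrite reduct_Imp, reduct_Atom by auto. simpl.
  split; [tauto | intros h; split; auto].
Qed.

Lemma bigAnd_iff (P : form atom -> Prop) :
  (forall F G, P (And F G) <-> P F /\ P G) -> P Top ->
  forall l, P (bigAnd l) <-> Forall P l.
Proof.
  intros HAnd HTop l. induction l as [|F l IH].
  - simpl. split; auto.
  - destruct l as [|G l'].
    + simpl. rewrite Forall_cons_iff. split; [auto|tauto].
    + change (P (And F (bigAnd (G :: l'))) <-> Forall P (F :: G :: l')).
      rewrite HAnd, IH, (Forall_cons_iff _ F). tauto.
Qed.

Lemma bigOr_iff (P : form atom -> Prop) :
  (forall F G, P (Or F G) <-> P F \/ P G) -> ~ P Bot ->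
  forall l, P (bigOr l) <-> Exists P l.
Proof.
  intros HOr HBot l. induction l as [|F l IH].
  - simpl. split; [tauto|]. intros h; inversion h.
  - destruct l as [|G l'].
    + simpl. rewrite Exists_cons. split; [auto|]. intros [h|h]; [auto|inversion h].
    + change (P (Or F (bigOr (G :: l'))) <-> Exists P (F :: G :: l')).
      rewrite HOr, IH, (Exists_cons _ F). tauto.
Qed.

Lemma reduct_bigAnd X Y (l : list (form atom)) : (forall a, Y a -> X a) ->
  (sat Y (reduct X (bigAnd l)) <-> Forall (fun F => sat Y (reduct X F)) l).
Proof.
  intros HY. apply (bigAnd_iff (fun F => sat Y (reduct X F))).
  - intros; apply reduct_And; auto.
  - unfold Top. rewrite reduct_Imp. simpl. tauto.
Qed.

Lemma reduct_bigOr X Y (l : list (form atom)) : (forall a, Y a -> X a) ->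
  (sat Y (reduct X (bigOr l)) <-> Exists (fun F => sat Y (reduct X F)) l).
Proof.
  intros HY. apply (bigOr_iff (fun F => sat Y (reduct X F))).
  - intros; apply reduct_Or; auto.
  - simpl. tauto.
Qed.

Lemma sat_bigAnd X (l : list (form atom)) : sat X (bigAnd l) <-> Forall (sat X) l.
Proof. apply bigAnd_iff; simpl; tauto. Qed.

Lemma sat_bigOr X (l : list (form atom)) : sat X (bigOr l) <-> Exists (sat X) l.
Proof. apply bigOr_iff; simpl; tauto. Qed.

End ReductSemantics.

Section BooleanSubsets.

Lemma subb_cons b c I J : subb (b :: I) (c :: J) = implb b c && subb I J.
Proof. reflexivity. Qed.

Lemma decb_true (P : Prop) : decb P = true <-> P.
Proof. unfold decb; destruct emi; split; intros; auto; congruence. Qed.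

Lemma decb_false (P : Prop) : decb P = false <-> ~ P.
Proof. unfold decb; destruct emi; split; intros; auto; try congruence; tauto. Qed.

Lemma sel_map {A B} (f : A -> B) I l : sel I (map f l) = map f (sel I l).
Proof. revert I; induction l; destruct I as [|[] I]; simpl; auto; now rewrite IHl. Qed.

Definition charvec {A} (P : A -> Prop) (l : list A) : list bool :=
  map (fun a => decb (P a)) l.

Lemma length_charvec {A} (P : A -> Prop) l : length (charvec P l) = length l.
Proof. apply length_map. Qed.

Lemma Forall_sel_charvec {A} (P : A -> Prop) l I : length I = length l ->
  (Forall P (sel I l) <-> subb I (charvec P l) = true).
Proof.
  revert I; induction l as [|a l IH]; intros [|b I] HL; simpl in *; try discriminate.
  - split; auto.
  - injection HL as HL. rewrite subb_cons. destruct b; simpl.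
    + rewrite Forall_cons_iff, IH, andb_true_iff, decb_true by auto.
      destruct (decb (P a)); simpl; tauto.
    + apply IH; auto.
Qed.

Lemma Forall_not_compl_charvec {A} (P : A -> Prop) l I : length I = length l ->
  (Forall (fun a => ~ P a) (sel (map negb I) l) <-> subb (charvec P l) I = true).
Proof.
  revert I; induction l as [|a l IH]; intros [|b I] HL; simpl in *; try discriminate.
  - split; auto.
  - injection HL as HL. rewrite subb_cons. destruct b; simpl.
    + rewrite implb_true_r. apply IH; auto.
    + rewrite Forall_cons_iff, IH, andb_true_iff by auto.
      rewrite <- decb_false. destruct (decb (P a)); simpl; intuition congruence.
Qed.

Lemma Exists_compl_charvec {A} (P : A -> Prop) l I : length I = length l ->
  (Exists P (sel (map negb I) l) <-> subb (charvec P l) I = false).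
Proof.
  intros HL. rewrite <- not_true_iff_false, <- Forall_not_compl_charvec,
    Forall_Exists_neg by auto.
  split; [tauto|]. intros h; apply NNPP; auto.
Qed.

Lemma charvec_subb {A} (P Q : A -> Prop) l : (forall a, P a -> Q a) ->
  subb (charvec P l) (charvec Q l) = true.
Proof.
  intros H; induction l as [|a l IH]; auto. simpl. rewrite subb_cons, IH.
  unfold decb. destruct (emi (P a)), (emi (Q a)); simpl; auto; exfalso; auto.
Qed.

Lemma subb_refl I : subb I I = true.
Proof. induction I as [|[] I]; auto. Qed.

Lemma subb_trans I J K : length I = length J -> length J = length K ->
  subb I J = true -> subb J K = true -> subb I K = true.
Proof.
  revert J K; induction I as [|a I IH]; intros [|b J] [|c K]; simpl;
    try discriminate; auto.
  intros H1 H2. rewrite !subb_cons, !andb_true_iff.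
  intros [h1 h2] [h3 h4]. split; [destruct a, b, c; auto|].
  apply (IH J K); auto; congruence.
Qed.

Lemma subb_antisym I J : length I = length J -> subb I J = true -> subb J I = true -> I = J.
Proof.
  revert J; induction I as [|a I IH]; intros [|b J]; simpl; try discriminate; auto.
  intros H1. rewrite !subb_cons, !andb_true_iff.
  intros [h1 h2] [h3 h4]. f_equal; [destruct a, b; simpl in *; congruence|].
  apply IH; auto.
Qed.

Lemma subsets_In n I : In I (subsets n) <-> length I = n.
Proof.
  revert I; induction n as [|n IH]; intros I; simpl.
  - split; [intros [<-|[]]; auto | destruct I; simpl; try discriminate; auto].
  - rewrite in_app_iff, !in_map_iff. split.
    + intros [[x [<- h]]|[x [<- h]]]; simpl; f_equal; apply IH; auto.
    + destruct I as [|[] I]; simpl; try discriminate; intros h; injection h as h.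
      * left; exists I; split; auto; apply IH; auto.
      * right; exists I; split; auto; apply IH; auto.
Qed.

Lemma sel_submset (l : list R) I J : length I = length l -> length J = length l ->
  subb I J = true -> submset (sel I l) (sel J l).
Proof.
  revert I J; induction l as [|x l IH]; intros [|a I] [|b J]; simpl; try discriminate.
  - intros; exists []; auto.
  - intros H1 H2. rewrite subb_cons, andb_true_iff. intros [h1 h2].
    injection H1 as H1; injection H2 as H2.
    destruct (IH I J H1 H2 h2) as [r Hr].
    destruct a, b; simpl in h1; try discriminate.
    + exists r. simpl. constructor; auto.
    + exists (x :: r). apply Permutation_cons_app; auto.
    + exists r; auto.
Qed.

Lemma sel_submset_full (l : list R) I : submset (sel I l) l.
Proof.
  revert I; induction l as [|x l IH]; intros I.
  - destruct I; exists []; auto.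
  - destruct I as [|[] I]; simpl.
    + exists (x :: l); auto.
    + destruct (IH I) as [r Hr]; exists r; constructor; auto.
    + destruct (IH I) as [r Hr]; exists (x :: r). apply Permutation_cons_app; auto.
Qed.

End BooleanSubsets.

Lemma agg_convex (op : list R -> Rbar) (prec : Rbar -> R -> Prop) (ws : list R) (N : R)
    (I1 I I2 : list bool) :
  monotone_agg op prec ws N \/ antimonotone_agg op prec ws N ->
  length I1 = length ws -> length I = length ws -> length I2 = length ws ->
  subb I1 I = true -> subb I I2 = true ->
  prec (op (sel I1 ws)) N -> prec (op (sel I2 ws)) N -> prec (op (sel I ws)) N.
Proof.
  intros [Hmono|Hanti] L1 L L2 H1 H2 S1 S2.
  - apply (Hmono (sel I1 ws)); [apply sel_submset | apply sel_submset_full | ]; auto.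
  - apply (Hanti (sel I2 ws)); [apply sel_submset | apply sel_submset_full | ]; auto.
Qed.

Section AtomFormulas.
Context {atom : Type} (X Y : atom -> Prop) (HYX : forall a, Y a -> X a) (l : list atom).

Lemma reduct_conj_atoms I : length I = length l ->
  (sat Y (reduct X (bigAnd (sel I (map (@Atom atom) l)))) <-> subb I (charvec Y l) = true).
Proof.
  intros HI. rewrite reduct_bigAnd, sel_map, Forall_map, <- Forall_sel_charvec by auto.
  split; apply Forall_impl; intros a; apply reduct_Atom; auto.
Qed.

Lemma sat_conj_atoms I : length I = length l ->
  (sat X (bigAnd (sel I (map (@Atom atom) l))) <-> subb I (charvec X l) = true).
Proof.
  intros HI. rewrite sat_bigAnd, sel_map, Forall_map, <- Forall_sel_charvec by auto.
  reflexivity.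
Qed.

Lemma reduct_disj_compl_atoms I : length I = length l ->
  (sat Y (reduct X (bigOr (sel (map negb I) (map (@Atom atom) l)))) <->
   subb (charvec Y l) I = false).
Proof.
  intros HI. rewrite reduct_bigOr, sel_map, Exists_map, <- Exists_compl_charvec by auto.
  split; apply Exists_impl; intros a; apply reduct_Atom; auto.
Qed.

Lemma sat_disj_compl_atoms I : length I = length l ->
  (sat X (bigOr (sel (map negb I) (map (@Atom atom) l))) <-> subb (charvec X l) I = false).
Proof.
  intros HI. rewrite sat_bigOr, sel_map, Exists_map, <- Exists_compl_charvec by auto.
  reflexivity.
Qed.

Lemma reduct_neg_compl_atoms I : length I = length l ->
  (Forall (fun F => sat Y (reduct X F)) (map Neg (sel (map negb I) (map (@Atom atom) l))) <->
   subb (charvec X l) I = true).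
Proof.
  intros HI. rewrite sel_map, !Forall_map, <- Forall_not_compl_charvec by auto.
  split; apply Forall_impl; intros a; apply reduct_Neg_Atom; auto.
Qed.

End AtomFormulas.

Section Proposition18.
Context {atom : Type} (op : list R -> Rbar) (prec : Rbar -> R -> Prop)
  (es : list (atom * R)) (N : R).

Definition atom_entries : list (form atom * R) :=
  map (fun p : atom * R => (Atom (fst p), snd p)) es.
Let atoms : list atom := map fst es.
Let ws : list R := map snd es.
Let n : nat := length es.
Let S (I : list bool) : Prop := prec (op (sel I ws)) N.

Lemma length_atoms : length atoms = n.
Proof. apply length_map. Qed.

Lemma length_ws : length ws = n.
Proof. apply length_map. Qed.

Lemma PDB_tr_atom_entries :
  PDB_tr op prec atom_entries N =
  bigOr (map (fun p : list bool * list bool =>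
                bigAnd (sel (fst p) (map (@Atom atom) atoms) ++
                        map Neg (sel (map negb (snd p)) (map (@Atom atom) atoms))))
           (filter (fun p : list bool * list bool =>
                      subb (fst p) (snd p) &&
                      decb (forall I, length I = n -> subb (fst p) I = true ->
                                      subb I (snd p) = true -> S I))
              (list_prod (subsets n) (subsets n)))).
Proof.
  unfold PDB_tr, atom_entries, S, atoms, ws, n. rewrite length_map, !map_map.
  reflexivity.
Qed.

Lemma prop18_rhs_atom_entries :
  prop18_rhs op prec atom_entries N =
  bigAnd (map (fun I => Imp (bigAnd (sel I (map (@Atom atom) atoms)))
                            (bigOr (sel (map negb I) (map (@Atom atom) atoms))))
            (filter (fun I => decb (~ S I)) (subsets n))).
Proof.
  unfold prop18_rhs, atom_entries, S, atoms, ws, n. rewrite length_map, !map_map.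
  reflexivity.
Qed.

Variables (X Y : atom -> Prop).
Hypothesis HYX : forall a, Y a -> X a.
Let chiY := charvec Y atoms.
Let chiX := charvec X atoms.

Lemma length_chiY : length chiY = n.
Proof. unfold chiY. now rewrite length_charvec, length_atoms. Qed.

Lemma length_chiX : length chiX = n.
Proof. unfold chiX. now rewrite length_charvec, length_atoms. Qed.

Lemma reduct_PDB_disjunct I1 I2 : length I1 = n -> length I2 = n ->
  (sat Y (reduct X (bigAnd (sel I1 (map (@Atom atom) atoms) ++
                            map Neg (sel (map negb I2) (map (@Atom atom) atoms))))) <->
   subb I1 chiY = true /\ subb chiX I2 = true).
Proof.
  intros L1 L2.
  rewrite reduct_bigAnd, Forall_app, <- reduct_bigAnd by auto.
  rewrite reduct_conj_atoms, reduct_neg_compl_atoms by (auto; rewrite length_atoms; auto).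
  reflexivity.
Qed.

Lemma reduct_PDB_tr :
  monotone_agg op prec ws N \/ antimonotone_agg op prec ws N ->
  (sat Y (reduct X (PDB_tr op prec atom_entries N)) <-> S chiY /\ S chiX).
Proof.
  intros Hmono. pose proof length_chiY as LY. pose proof length_chiX as LX.
  assert (HYXv : subb chiY chiX = true) by (apply charvec_subb; auto).
  rewrite PDB_tr_atom_entries, reduct_bigOr, Exists_map, Exists_exists by auto.
  split.
  - intros [[I1 I2] [Hin Hdisj]].
    rewrite filter_In, in_prod_iff, !subsets_In, andb_true_iff, decb_true in Hin.
    simpl in Hin, Hdisj. destruct Hin as [[L1 L2] [_ Hbetween]].
    apply reduct_PDB_disjunct in Hdisj as [H1 H2]; auto.
    split; apply Hbetween; auto.
    + apply (subb_trans chiY chiX I2); auto; congruence.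
    + apply (subb_trans I1 chiY chiX); auto; congruence.
  - intros [SY SX]. exists (chiY, chiX). simpl. split.
    + rewrite filter_In, in_prod_iff, !subsets_In, andb_true_iff, decb_true.
      repeat split; auto. intros I LI H1 H2.
      apply (agg_convex op prec ws N chiY I chiX); rewrite ?length_ws; auto.
    + apply reduct_PDB_disjunct; auto. split; apply subb_refl.
Qed.

(* Y satisfies the right-hand side's reduct iff the aggregate holds at both Y and X:
   the conjunct for I fails exactly at I = chi Y or I = chi X when S I fails. *)
Lemma reduct_prop18_rhs :
  sat Y (reduct X (prop18_rhs op prec atom_entries N)) <-> S chiY /\ S chiX.
Proof.
  pose proof length_chiY as LY. pose proof length_chiX as LX.
  pose proof length_atoms as Ln.
  assert (Hconj : forall I, length I = n ->
    sat Y (reduct X (Imp (bigAnd (sel I (map (@Atom atom) atoms)))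
                         (bigOr (sel (map negb I) (map (@Atom atom) atoms))))) <->
    (subb I chiX = true -> subb chiX I = false) /\
    (subb I chiY = true -> subb chiY I = false)).
  { intros I LI. rewrite reduct_Imp, reduct_conj_atoms, sat_conj_atoms,
      reduct_disj_compl_atoms, sat_disj_compl_atoms by (auto; congruence).
    reflexivity. }
  assert (Hfilter : forall I, In I (filter (fun I => decb (~ S I)) (subsets n)) <->
                         length I = n /\ ~ S I)
    by (intros I; rewrite filter_In, subsets_In, decb_true; reflexivity).
  rewrite prop18_rhs_atom_entries, reduct_bigAnd, Forall_map, Forall_forall by auto.
  split.
  - intros Hall. split; apply NNPP; intro HnS.
    + destruct (proj1 (Hconj chiY ltac:(auto)) (Hall chiY (proj2 (Hfilter _) (conj LY HnS))))
        as [_ Hbad].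
      rewrite subb_refl in Hbad. discriminate (Hbad eq_refl).
    + destruct (proj1 (Hconj chiX ltac:(auto)) (Hall chiX (proj2 (Hfilter _) (conj LX HnS))))
        as [Hbad _].
      rewrite subb_refl in Hbad. discriminate (Hbad eq_refl).
  - intros [SY SX] I HI. apply Hfilter in HI as [LI HnS]. apply Hconj; auto.
    split; intros Hsub; apply not_true_iff_false; intros Hsub'; apply HnS.
    + rewrite (subb_antisym I chiX); auto. congruence.
    + rewrite (subb_antisym I chiY); auto. congruence.
Qed.

End Proposition18.

Theorem proposition18 (atom : Type) (op : list R -> Rbar) (prec : Rbar -> R -> Prop)
    (es : list (atom * R)) (N : R)
    (op_multiset : forall l1 l2, Permutation l1 l2 -> op l1 = op l2)
    (Hmono : monotone_agg op prec (map snd es) N \/ antimonotone_agg op prec (map snd es) N) :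
  let es' := map (fun p : atom * R => (Atom (fst p), snd p)) es in
  strongly_equivalent (PDB_tr op prec es' N) (prop18_rhs op prec es' N).
Proof.
  intros es'. change es' with (atom_entries es).
  apply strongly_equivalent_of_reducts. intros X Y HYX.
  rewrite reduct_PDB_tr, reduct_prop18_rhs by auto.
  reflexivity.
Qed.
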